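(* Let $R,S$ be finite nonempty sets, $k$ a positive integer, $p_r>0$ ($r\in R$), $T=\sum_{r\in R}p_r$, $d_{r,s}\ge0$, and $\kappa<0$. Let $F$ be the set of $(\mathbf x,\mathbf y)$ with $x_s,y_{r,s}\in\{0,1\}$, $\sum_{s\in S}x_s=k$, $y_{r,s}\le x_s$, and $\sum_{s\in S}y_{r,s}=1$ for all $r$. For $\mathbf y$ let $\overline{\mathcal K}(\mathbf y)=\sum_{r,s}p_ry_{r,s}e^{-\kappa d_{r,s}}$ and $\mathcal K(\mathbf y)=-\frac1\kappa\ln\left(\frac1T\overline{\mathcal K}(\mathbf y)\right)$. Let $U\subseteq S$, $c_s\ge0$ for $s\in U$, $\sigma(\mathbf x)=\sum_{s\in U}c_sx_s$. Let $(\mathbf x^{all},\mathbf y^{all})$ be an optimal solution of $\min\{\overline{\mathcal K}(\mathbf y):(\mathbf x,\mathbf y)\in F\}$, and set $\mathcal K^{all}=\mathcal K(\mathbf y^{all})$ and $\sigma^{all}=\sigma(\mathbf x^{all})$. Set $\hat{\mathcal K}=\mathcal K^{all}$ and let $(\mathbf x^*,\mathbf y^*,v^*,q^* )$ be optimal for \[ \text{(KPL}^p)\quad \min\ \overline{\mathcal K}(\mathbf y)+Te^{-\kappa\hat{\mathcal K}}(v-1)\ \text{ s.t. } (\mathbf x,\mathbf y)\in F,\ v\ge e^{q},\ q=-\kappa\,\sigma(\mathbf x). \] Let $\sigma^*=\sigma(\mathbf x^* )$, $\mathcal K^*=\mathcal K(\mathbf y^* )$, $\Delta=\hat{\mathcal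 K}-\mathcal K^*$, and define $\hat\sigma$ by \[ \mathcal K^*+\hat\sigma=-\frac1\kappa\ln\left(\frac1T\left(\overline{\mathcal K}(\mathbf y^* )+Te^{-\kappa\hat{\mathcal K}}\left(e^{-\kappa\sigma^*}-1\right)\right)\right). \] Then the penalized locations are under-penalized, i.e. $\hat\sigma\le\sigma^*$, and \[ \sigma^*-\hat\sigma\le|\Delta|\left(1-e^{\kappa\sigma^*}\right)\le\sigma^{all}\left(1-e^{\kappa\sigma^*}\right)\le\sigma^{all}\left(1-e^{\kappa\sigma^{all}}\right). \]
   Context: $U$ is a set of less desirable potential locations, $c_s$ is the penalty (in distance units) for selecting $s\in U$; $\hat\sigma$ is the penalty actually applied to the optimal Kolm–Pollak score by (KPL$^p$), whose parameter $\hat{\mathcal K}$ approximates the optimal unpenalized Kolm–Pollak score $\mathcal K^*$. *)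

From mathcomp Require Import all_boot all_order all_algebra.
From mathcomp Require Import all_classical all_reals all_analysis.
Set Implicit Arguments. Unset Strict Implicit. Unset Printing Implicit Defensive.
Import Order.TTheory GRing.Theory Num.Theory.
Local Open Scope ring_scope.

Section KP.
Variables (R : realType) (Dm Loc : finType).

Definition feasible (k : nat) (x : Loc -> bool) (y : Dm -> Loc -> bool) : Prop :=
  [/\ (\sum_(s : Loc) (x s : nat))%N = k,
      (forall r s, y r s ==> x s) &
      (forall r, (\sum_(s : Loc) (y r s : nat))%N = 1%N)].

Definition Ttot (p : Dm -> R) : R := \sum_(r : Dm) p r.

Definition Kbar (p : Dm -> R) (d : Dm -> Loc -> R) (kappa : R)
    (y : Dm -> Loc -> bool) : R :=
  \sum_(r : Dm) \sum_(s : Loc) p r * (y r s)%:R * expR (- kappa * d r s).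

Definition KP (p : Dm -> R) (d : Dm -> Loc -> R) (kappa : R)
    (y : Dm -> Loc -> bool) : R :=
  - kappa^-1 * ln ((Ttot p)^-1 * Kbar p d kappa y).

Definition sigma (U : {set Loc}) (c : Loc -> R) (x : Loc -> bool) : R :=
  \sum_(s in U) c s * (x s)%:R.

Definition KPLp_obj (p : Dm -> R) (d : Dm -> Loc -> R) (kappa Khat : R)
    (y : Dm -> Loc -> bool) (v : R) : R :=
  Kbar p d kappa y + Ttot p * expR (- kappa * Khat) * (v - 1).

Definition KPLp_feasible (k : nat) (U : {set Loc}) (c : Loc -> R) (kappa : R)
    (x : Loc -> bool) (y : Dm -> Loc -> bool) (v q : R) : Prop :=
  [/\ feasible k x y, expR q <= v & q = - kappa * sigma U c x].

End KP.

(** Write [E z = exp(-kappa z)], increasing as [kappa < 0], so that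
    [Kbar y = T E(K y)].  Optimality of [y_all] gives [K_hat <= K_s], and comparing
    (KPL^p) at its optimum with the feasible point [(x_all, y_all, E sigma_all)] gives
    [E(K_s) + E(K_hat) (E sigma_s - 1) <= E(K_hat + sigma_all)], whose left side is
    [E(K_s + sigma_hat)] by definition of [sigma_hat].  All claimed inequalities but
    the second follow by monotonicity of [E]; the second is convexity of [exp], since
    [exp(kappa (sigma_s - sigma_hat)) = (1 - mu) + mu exp(kappa (K_s - K_hat))] with
    [mu = 1 - exp(kappa sigma_s)] in [[0, 1]]. *)
From mathcomp Require Import all_boot all_order all_algebra.
From mathcomp Require Import all_classical all_reals all_analysis.
From mathcomp Require Import ring.
Set Implicit Arguments. Unset Strict Implicit. Unset Printing Implicit Defensive.
Import Order.TTheory GRing.Theory Num.Theory.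
Local Open Scope ring_scope.

Lemma expR_mul_le_interp (R : realType) (lam u : R) : 0 <= lam -> lam <= 1 ->
  expR (lam * u) <= 1 - lam + lam * expR u.
Proof.
move=> lam_ge0 lam_le1.
have lam01 : Itv.spec (@Itv.num_sem R) (Itv.Real `[0%Z, 1%Z]) lam.
  by rewrite /= /Itv.num_sem /= in_itv /= lam_ge0 lam_le1 ger0_real.
have := convex_expR (@Itv.Def R _ _ lam lam01) u 0.
by rewrite !convRE /= expR0 mulr0 addr0 mulr1 addrC.
Qed.

Lemma sumr_gt0_witness (R : numDomainType) (I : finType) (F : I -> R) (i0 : I) :
  (forall i, 0 <= F i) -> 0 < F i0 -> 0 < \sum_i F i.
Proof.
by move=> F_ge0 Fi0_gt0; rewrite (bigD1 i0) //= ltr_pwDl // sumr_ge0.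
Qed.

Lemma expR_Nmul_scaled_ln (R : realType) (kappa z : R) : kappa != 0 -> 0 < z ->
  expR (- kappa * (- kappa^-1 * ln z)) = z.
Proof. by move=> kappa_neq0 z_gt0; rewrite mulrA mulrNN mulfV // mul1r lnK. Qed.

Section PenaltyGap.
Variables (R : realType) (kappa Khat Ks sigs sighat sigall : R).
Hypotheses (kappa_lt0 : kappa < 0) (Khat_le_Ks : Khat <= Ks) (sigs_ge0 : 0 <= sigs).
Hypothesis sighat_def : expR (- kappa * (Ks + sighat)) =
  expR (- kappa * Ks) + expR (- kappa * Khat) * (expR (- kappa * sigs) - 1).
Hypothesis penalized_le_all :
  expR (- kappa * Ks) + expR (- kappa * Khat) * (expR (- kappa * sigs) - 1)
    <= expR (- kappa * Khat) + expR (- kappa * Khat) * (expR (- kappa * sigall) - 1).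

Let ler_expR_Nmul (a b : R) : (expR (- kappa * a) <= expR (- kappa * b)) = (a <= b).
Proof. by rewrite ler_expR ler_pM2l // oppr_gt0. Qed.

Let penalized_le_expR :
  expR (- kappa * Ks) + expR (- kappa * Khat) * (expR (- kappa * sigs) - 1)
    <= expR (- kappa * (Khat + sigall)).
Proof.
apply: (le_trans penalized_le_all).
by rewrite (mulrDr (- kappa) Khat) expRD mulrBr mulr1 addrC subrK.
Qed.

Let expR_sigs_ge1 : 1 <= expR (- kappa * sigs).
Proof. by rewrite -expR0 ler_expR mulr_ge0 // oppr_ge0 ltW. Qed.

Let penalty_factor_ge0 : 0 <= 1 - expR (kappa * sigs).
Proof. by rewrite subr_ge0 -expR0 ler_expR nmulr_rle0. Qed.

Lemma sighat_le_sigs : sighat <= sigs.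
Proof.
rewrite -(lerD2l Ks) -ler_expR_Nmul sighat_def (mulrDr (- kappa) Ks) expRD.
have -> : expR (- kappa * Ks) * expR (- kappa * sigs)
    = expR (- kappa * Ks) + expR (- kappa * Ks) * (expR (- kappa * sigs) - 1) by ring.
by rewrite lerD2l ler_wpM2r ?subr_ge0 // ler_expR_Nmul.
Qed.

Lemma sigs_le_sigall : sigs <= sigall.
Proof.
rewrite -(lerD2l Khat) -ler_expR_Nmul; apply: le_trans penalized_le_expR.
have -> : expR (- kappa * (Khat + sigs))
    = expR (- kappa * Khat) + expR (- kappa * Khat) * (expR (- kappa * sigs) - 1).
  by rewrite (mulrDr (- kappa) Khat) expRD; ring.
by rewrite lerD2r ler_expR_Nmul.
Qed.

Lemma Ks_le_Khat_sigall : Ks - Khat <= sigall.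
Proof.
rewrite lerBlDl -ler_expR_Nmul; apply: le_trans penalized_le_expR.
by rewrite lerDl mulr_ge0 ?expR_ge0 // subr_ge0.
Qed.

Lemma expR_penalty_gap : expR (kappa * (sigs - sighat)) =
  1 - (1 - expR (kappa * sigs)) + (1 - expR (kappa * sigs)) * expR (kappa * (Ks - Khat)).
Proof.
have expR_sigs : expR (kappa * sigs) = (expR (- kappa * sigs))^-1.
  by rewrite mulNr expRN invrK.
have expR_sighat : expR (- kappa * sighat)
    = 1 + expR (kappa * (Ks - Khat)) * (expR (- kappa * sigs) - 1).
  apply: (mulfI (lt0r_neq0 (expR_gt0 (- kappa * Ks)))).
  rewrite -expRD -mulrDr sighat_def (mulrDr (expR (- kappa * Ks)) 1) mulr1.
  by rewrite mulrA -expRD; congr (_ + expR _ * _); ring.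
rewrite mulrBr expRD expR_sigs -mulNr expR_sighat.
by field; rewrite lt0r_neq0 // (lt_le_trans ltr01 expR_sigs_ge1).
Qed.

Lemma penalty_gap_le : sigs - sighat <= (Ks - Khat) * (1 - expR (kappa * sigs)).
Proof.
have mu_le1 : 1 - expR (kappa * sigs) <= 1 by rewrite gerBl expR_ge0.
have := expR_mul_le_interp (kappa * (Ks - Khat)) penalty_factor_ge0 mu_le1.
by rewrite -expR_penalty_gap ler_expR mulrC -mulrA ler_nM2l.
Qed.

Lemma penalty_gap_chain :
  [/\ sighat <= sigs,
      sigs - sighat <= `|Khat - Ks| * (1 - expR (kappa * sigs)),
      `|Khat - Ks| * (1 - expR (kappa * sigs)) <= sigall * (1 - expR (kappa * sigs)) &
      sigall * (1 - expR (kappa * sigs)) <= sigall * (1 - expR (kappa * sigall))].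
Proof.
have absE : `|Khat - Ks| = Ks - Khat by rewrite ler0_norm ?subr_le0 // opprB.
rewrite absE; split.
- exact: sighat_le_sigs.
- exact: penalty_gap_le.
- by rewrite ler_wpM2r ?penalty_factor_ge0 ?Ks_le_Khat_sigall.
- rewrite ler_wpM2l ?(le_trans sigs_ge0 sigs_le_sigall) //.
  by rewrite lerD2l lerN2 ler_expR ler_nM2l // sigs_le_sigall.
Qed.

End PenaltyGap.

Lemma sigma_ge0 (R : realType) (Loc : finType) (U : {set Loc}) (c : Loc -> R) x :
  (forall s, s \in U -> 0 <= c s) -> 0 <= sigma U c x.
Proof. by move=> c_ge0; rewrite /sigma sumr_ge0 // => s /c_ge0 ?; rewrite mulr_ge0. Qed.

Section KPObjective.
Variables (R : realType) (Dm Loc : finType) (p : Dm -> R) (d : Dm -> Loc -> R) (kappa : R).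
Hypotheses (p_gt0 : forall r, 0 < p r) (kappa_lt0 : kappa < 0).
Variable r0 : Dm.

Lemma Ttot_gt0 : 0 < Ttot p.
Proof. by rewrite /Ttot (sumr_gt0_witness (i0 := r0)) // => r; apply: ltW. Qed.

Lemma Kbar_gt0 k x y : feasible k x y -> 0 < Kbar p d kappa y.
Proof.
move=> [_ _ y_assign].
have term_ge0 r s : 0 <= p r * (y r s)%:R * expR (- kappa * d r s).
  by rewrite !mulr_ge0 ?expR_ge0 // ltW.
apply: (sumr_gt0_witness (i0 := r0)) => [r|]; first exact: sumr_ge0.
have [s0 y_r0s0] : exists s, y r0 s.
  apply/existsP; apply: contra_eqT (y_assign r0) => /existsPn y_r0_false.
  by rewrite big1 // => s _; rewrite (negbTE (y_r0_false s)).
by apply: (sumr_gt0_witness (i0 := s0)) => //; rewrite y_r0s0 mulr1 mulr_gt0 ?expR_gt0.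
Qed.

Lemma Kbar_expR_KP k x y : feasible k x y ->
  Kbar p d kappa y = Ttot p * expR (- kappa * KP p d kappa y).
Proof.
move=> feas; have T_neq0 := lt0r_neq0 Ttot_gt0.
rewrite /KP expR_Nmul_scaled_ln ?ltr0_neq0 ?mulr_gt0 ?invr_gt0 ?Ttot_gt0 ?(Kbar_gt0 feas) //.
by rewrite mulrA mulfV ?mul1r.
Qed.

Lemma ler_KP k x y x' y' : feasible k x y -> feasible k x' y' ->
  (KP p d kappa y <= KP p d kappa y') = (Kbar p d kappa y <= Kbar p d kappa y').
Proof.
move=> feas feas'; rewrite (Kbar_expR_KP feas) (Kbar_expR_KP feas').
by rewrite [in RHS]ler_pM2l ?Ttot_gt0 // ler_expR [in RHS]ler_pM2l // oppr_gt0.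
Qed.

Lemma KPLp_obj_expR k x y Khat v : feasible k x y ->
  KPLp_obj p d kappa Khat y v
    = Ttot p * (expR (- kappa * KP p d kappa y) + expR (- kappa * Khat) * (v - 1)).
Proof. by move=> feas; rewrite /KPLp_obj (Kbar_expR_KP feas); ring. Qed.

End KPObjective.

Theorem theorem4 (R : realType) (Dm Loc : finType)
  (hDm : (0 < #|Dm|)%N) (hLoc : (0 < #|Loc|)%N)
  (k : nat) (hk : (0 < k)%N)
  (p : Dm -> R) (hp : forall r, 0 < p r)
  (d : Dm -> Loc -> R) (hd : forall r s, 0 <= d r s)
  (kappa : R) (hkappa : kappa < 0)
  (U : {set Loc}) (c : Loc -> R) (hc : forall s, s \in U -> 0 <= c s)
  (xall : Loc -> bool) (yall : Dm -> Loc -> bool)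
  (hall_feas : feasible k xall yall)
  (hall_opt : forall x y, feasible k x y -> Kbar p d kappa yall <= Kbar p d kappa y)
  (xs : Loc -> bool) (ys : Dm -> Loc -> bool) (vs qs : R)
  (hs_feas : KPLp_feasible k U c kappa xs ys vs qs)
  (hs_opt : forall x y v q, KPLp_feasible k U c kappa x y v q ->
      KPLp_obj p d kappa (KP p d kappa yall) ys vs
        <= KPLp_obj p d kappa (KP p d kappa yall) y v)
  (sighat : R)
  (hsighat : KP p d kappa ys + sighat =
     - kappa^-1 * ln ((Ttot p)^-1 *
        (Kbar p d kappa ys + Ttot p * expR (- kappa * KP p d kappa yall)
                              * (expR (- kappa * sigma U c xs) - 1)))) :
  let Khat := KP p d kappa yall in
  let sigall := sigma U c xall in
  let sigs := sigma U c xs in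
  let Ks := KP p d kappa ys in
  let Delta := Khat - Ks in
  [/\ sighat <= sigs,
      sigs - sighat <= `|Delta| * (1 - expR (kappa * sigs)),
      `|Delta| * (1 - expR (kappa * sigs)) <= sigall * (1 - expR (kappa * sigs)) &
      sigall * (1 - expR (kappa * sigs)) <= sigall * (1 - expR (kappa * sigall))].
Proof.
move=> Khat sigall sigs Ks Delta.
have [r0 _] := card_gt0P hDm.
have [ys_feas vs_ge qs_def] := hs_feas.
have T_gt0 : 0 < Ttot p := Ttot_gt0 hp r0.
have sigs_ge0 : 0 <= sigs := sigma_ge0 xs hc.
have obj_ys : (Ttot p)^-1 * KPLp_obj p d kappa Khat ys (expR (- kappa * sigs))
    = expR (- kappa * Ks) + expR (- kappa * Khat) * (expR (- kappa * sigs) - 1).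
  by rewrite (KPLp_obj_expR d hp hkappa r0 _ _ ys_feas) mulKf // lt0r_neq0.
have obj_le : KPLp_obj p d kappa Khat ys (expR (- kappa * sigs))
    <= KPLp_obj p d kappa Khat yall (expR (- kappa * sigall)).
  apply: le_trans (hs_opt _ _ _ _ (And3 hall_feas (lexx _) erefl)).
  rewrite lerD2l ler_wpM2l ?mulr_ge0 ?expR_ge0 ?(ltW T_gt0) // lerD2r.
  by rewrite qs_def in vs_ge.
apply: penalty_gap_chain => //.
- by rewrite (ler_KP d hp hkappa r0 hall_feas ys_feas) (hall_opt _ _ ys_feas).
- rewrite /Ks hsighat -/(KPLp_obj p d kappa Khat ys (expR (- kappa * sigs))) obj_ys.
  rewrite expR_Nmul_scaled_ln ?ltr0_neq0 // ltr_wpDr ?expR_gt0 //.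
  by rewrite mulr_ge0 ?expR_ge0 // subr_ge0 -expR0 ler_expR mulr_ge0 // oppr_ge0 ltW.
- move: obj_le; rewrite (KPLp_obj_expR d hp hkappa r0 _ _ ys_feas).
  by rewrite (KPLp_obj_expR d hp hkappa r0 _ _ hall_feas) ler_pM2l.
Qed.
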